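(* Let $\widehat z_2(s,t)$ be a complex-valued function of class $\mathcal{C}^7$ on $[0,\epsilon]\times I$, where $I$ is a neighborhood of $[0,2\pi]$, such that $\widehat z_2(s,t)=e^{it}-\tfrac43 a s^4e^{3it}+O(s^5)$ with $a\in\mathbb{R}$, $\operatorname{Im}\widehat z_2(s,0)=0$ for all $s\in[0,\epsilon]$, and for each $s\in(0,\epsilon]$ the map $t\mapsto\widehat z_2(s,t)$ is periodic with period $T_s$ and parametrizes a simple closed curve on $[0,T_s]$ (with $T_0=2\pi$). Then, after possibly shrinking $\epsilon$, the function $[0,\epsilon]\ni s\mapsto T_s\in\mathbb{R}$ is of class $\mathcal{C}^7$ and $T_s=2\pi+O(s^5)$.
   Context: In the paper, $\widehat z_2(s,t)=z_2(s,t)/s$, where $z_2(s,t)$ is the $z_2$-component of the family of chains (solutions of the Fefferman Hamiltonian system) of the hypersurface $M$ with the specified initial conditions; the expansion hypothesis corresponds to $z_2(s,t)=se^{it}-\tfrac43 a s^5e^{3it}+O(s^6)$. *)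

From Stdlib Require Import Reals.
From Coquelicot Require Import Coquelicot.
Open Scope R_scope.

Definition cis (t : R) : C := (cos t, sin t).

Fixpoint C2k (k : nat) (U : R * R -> Prop) (f : R -> R -> R) : Prop :=
  (forall p, U p -> continuous (fun q : R * R => f (fst q) (snd q)) p) /\
  match k with
  | O => True
  | S k' =>
      (forall p, U p -> ex_derive (fun x => f x (snd p)) (fst p)
                     /\ ex_derive (fun y => f (fst p) y) (snd p)) /\
      C2k k' U (fun x y => Derive (fun x' => f x' y) x) /\
      C2k k' U (fun x y => Derive (fun y' => f x y') y)
  end.

Fixpoint C1k (k : nat) (U : R -> Prop) (f : R -> R) : Prop :=
  (forall x, U x -> continuous f x) /\
  match k with
  | O => True
  | S k' => (forall x, U x -> ex_derive f x) /\ C1k k' U (Derive f)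
  end.

Definition C2k_on_complex (k : nat) (S : R * R -> Prop) (z : R -> R -> C) : Prop :=
  exists U : R * R -> Prop, open U /\ (forall p, S p -> U p) /\
    C2k k U (fun s t => Re (z s t)) /\ C2k k U (fun s t => Im (z s t)).

Definition C1k_on_interval (k : nat) (a b : R) (f : R -> R) : Prop :=
  exists (V : R -> Prop) (g : R -> R), open V /\
    (forall x, a <= x <= b -> V x) /\ C1k k V g /\
    (forall x, a <= x <= b -> g x = f x).

From Stdlib Require Import Reals Lra Lia Classical ClassicalEpsilon Ranalysis5.
From Coquelicot Require Import Coquelicot.
Open Scope R_scope.

(* Write [zh = X + i Y].  At [s = 0] the curve is the unit circle, so [Y 0] has a simple
   zero at [2 PI], and the implicit function theorem gives a C^7 function [g] with
   [g 0 = 2 PI] and [Y s (g s) = 0].  For small [s > 0] the closed curve [zh s] is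
   C^0-close to the circle, with C^1-close velocity, so its period is close to [2 k PI]
   for some [k].  The case [k = 0] is excluded since [Y s] increases near [0], and
   [k >= 2] since a simple closed curve cannot wind twice around the origin: the
   intersections of the successive laps with a ray are distinct and come back to the
   first one after [k] laps, so two consecutive laps change order while the ray turns,
   and therefore meet.  Hence [T s] is the zero of [Y s] near [2 PI], that is [g s].
   Finally [Y s (T s) = 0] and the expansion give, for [d = T s - 2 PI],
   [sin d = 4/3 a s^4 sin (3 d) + O(s^5)], whence [d = O(s^5)]. *)

(** * Elementary trigonometric bounds *)

Lemma PI_gt_3 : 3 < PI.
Proof. pose proof PI2_3_2; lra. Qed.

Lemma sin_ge_cubic x : 0 <= x <= 4 -> x - x ^ 3 / 6 <= sin x.
Proof.
intros hx. destruct (pre_sin_bound x 0 (proj1 hx) (proj2 hx)) as [lb _].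
replace (x - x ^ 3 / 6) with (sin_approx x (2 * 0 + 1)); [exact lb|].
unfold sin_approx, sin_term; simpl. field.
Qed.

Lemma cos_ge_quadratic x : -2 <= x <= 2 -> 1 - x ^ 2 / 2 <= cos x.
Proof.
intros hx. destruct (pre_cos_bound x 0 (proj1 hx) (proj2 hx)) as [lb _].
replace (1 - x ^ 2 / 2) with (cos_approx x (2 * 0 + 1)); [exact lb|].
unfold cos_approx, cos_term; simpl. field.
Qed.

Lemma sin_ge_half x : 0 <= x <= 1.7 -> x / 2 <= sin x.
Proof.
intros hx. pose proof (sin_ge_cubic x ltac:(lra)).
assert (x ^ 3 <= 3 * x) by (replace (x ^ 3) with (x * x ^ 2) by ring; nra). lra.
Qed.

Lemma Rabs_sin_ge_half x : Rabs x <= 1.7 -> Rabs x / 2 <= Rabs (sin x).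
Proof.
intros hx. destruct (Rle_dec 0 x).
- rewrite Rabs_right in hx |- * by lra. pose proof (sin_ge_half x ltac:(lra)).
  rewrite Rabs_right; lra.
- rewrite Rabs_left in hx |- * by lra. rewrite <- Rabs_Ropp, <- sin_neg.
  pose proof (sin_ge_half (- x) ltac:(lra)). rewrite Rabs_right; lra.
Qed.

Lemma Rabs_sin_le x : Rabs (sin x) <= Rabs x.
Proof.
assert (pos : forall y, 0 <= y -> Rabs (sin y) <= y).
{ intros y hy. destruct (Req_dec y 0) as [->|ny]; [rewrite sin_0, Rabs_R0; lra|].
  pose proof (sin_lt_x y ltac:(lra)). pose proof (SIN_bound y). pose proof PI_gt_3.
  destruct (Rle_dec y PI).
  - pose proof (sin_ge_0 y hy r). rewrite Rabs_right; lra.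
  - apply Rabs_le; lra. }
destruct (Rle_dec 0 x).
- rewrite (Rabs_right x) by lra. now apply pos.
- rewrite (Rabs_left x), <- Rabs_Ropp, <- sin_neg by lra. apply pos; lra.
Qed.

Lemma near_multiple_of_2PI x eta : 0 <= x -> 0 <= eta <= 1 / 4 ->
  1 - eta <= cos x -> Rabs (sin x) <= eta ->
  exists k : nat, Rabs (x - 2 * INR k * PI) <= 2 * eta.
Proof.
intros hx heta hcos hsin. pose proof PI_gt_3.
destruct (nfloor_ex (x / (2 * PI) + 1 / 2)) as [k hk].
{ assert (0 <= x / (2 * PI)) by (apply Rdiv_le_0_compat; lra). lra. }
exists k. set (y := x - 2 * INR k * PI).
assert (ey : x = y + 2 * INR k * PI) by (unfold y; ring).
rewrite ey, cos_period in hcos. rewrite ey, sin_period in hsin.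
assert (hy : - PI <= y < PI).
{ assert (e : (x / (2 * PI) + 1 / 2) * (2 * PI) = x + PI) by (field; lra).
  assert (INR k * (2 * PI) <= x + PI) by (rewrite <- e; apply Rmult_le_compat_r; lra).
  assert (x + PI < (INR k + 1) * (2 * PI)) by (rewrite <- e; apply Rmult_lt_compat_r; lra).
  unfold y. lra. }
assert (hy2 : - (PI / 2) < y < PI / 2).
{ split; apply Rnot_le_lt; intros hle.
  - pose proof (cos_le_0 (- y) ltac:(lra) ltac:(lra)). rewrite cos_neg in *. lra.
  - pose proof (cos_le_0 y ltac:(lra) ltac:(lra)). lra. }
assert (sin1 : 5 / 6 <= sin 1) by (pose proof (sin_ge_cubic 1 ltac:(lra)); lra).
apply Rabs_le_between in hsin.
assert (hy1 : Rabs y <= 1).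
{ apply Rabs_le. split; apply Rnot_lt_le; intros hlt.
  - pose proof (sin_incr_1 y (- 1) ltac:(lra) ltac:(lra) ltac:(lra) ltac:(lra) ltac:(lra)).
    replace (sin (- 1)) with (- sin 1) in * by (rewrite <- sin_neg; f_equal; lra). lra.
  - pose proof (sin_incr_1 1 y ltac:(lra) ltac:(lra) ltac:(lra) ltac:(lra) ltac:(lra)). lra. }
pose proof (Rabs_sin_ge_half y ltac:(lra)).
assert (Rabs (sin y) <= eta) by (apply Rabs_le; lra). lra.
Qed.

Lemma sin_root_near_2PI x : Rabs (x - 2 * PI) <= 1.7 -> sin x = 0 -> x = 2 * PI.
Proof.
intros hx sx. pose proof (Rabs_sin_ge_half _ hx) as lb.
rewrite sin_minus, sin_2PI, cos_2PI, sx, Rmult_0_l, Rmult_0_r, Rminus_0_r, Rabs_R0 in lb.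
pose proof (Rabs_pos (x - 2 * PI)).
assert (e : Rabs (x - 2 * PI) = 0) by lra. apply Rabs_eq_0 in e. lra.
Qed.

Lemma small_root_of_sin_perturbation x c E : Rabs x <= 1.7 -> Rabs c <= 1 / 12 ->
  Rabs (sin x - c * sin (3 * x)) <= E -> Rabs x <= 4 * E.
Proof.
intros hx hc hE. pose proof (Rabs_sin_ge_half x hx).
pose proof (Rabs_sin_le (3 * x)) as s3. rewrite Rabs_mult, (Rabs_right 3) in s3 by lra.
assert (Rabs (sin x) <= E + Rabs c * Rabs (sin (3 * x))).
{ rewrite <- Rabs_mult. replace (sin x) with ((sin x - c * sin (3 * x)) + c * sin (3 * x)) at 1
    by ring. apply (Rle_trans _ _ _ (Rabs_triang _ _)). lra. }
assert (Rabs c * Rabs (sin (3 * x)) <= 1 / 12 * (3 * Rabs x))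
  by (apply Rmult_le_compat; auto using Rabs_pos).
lra.
Qed.

(** * Smoothness classes *)

Definition partial_x (f : R -> R -> R) x y := Derive (fun x' => f x' y) x.
Definition partial_y (f : R -> R -> R) x y := Derive (fun y' => f x y') y.

Section OneVariable.

Variable V : R -> Prop.
Hypothesis V_open : open V.

Lemma C1k_pred m f : C1k (S m) V f -> C1k m V f.
Proof.
revert f; induction m as [|m IH]; intros f [fc [fd fk]].
- split; [exact fc | exact I].
- split; [exact fc | split; [exact fd | exact (IH _ fk)]].
Qed.

Lemma C1k_continuous m f : C1k m V f -> forall x, V x -> continuous f x.
Proof. destruct m; intros [fc _]; exact fc. Qed.

Lemma C1k_ext m f g : (forall x, V x -> f x = g x) -> C1k m V f -> C1k m V g.
Proof.
assert (near : forall x, V x -> locally x V) by (intros; apply V_open; auto).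
revert f g; induction m as [|m IH]; intros f g efg [fc fk].
- split; [|exact I]. intros x Vx.
  apply (continuous_ext_loc g f x); auto. exact (filter_imp _ _ efg (near x Vx)).
- destruct fk as [fd fk]. split; [|split].
  + intros x Vx. apply (continuous_ext_loc g f x); auto. exact (filter_imp _ _ efg (near x Vx)).
  + intros x Vx. apply (ex_derive_ext_loc f g x); auto. exact (filter_imp _ _ efg (near x Vx)).
  + apply (IH (Derive f)); auto. intros x Vx. apply Derive_ext_loc.
    exact (filter_imp _ _ efg (near x Vx)).
Qed.

Lemma C1k_plus m f g : C1k m V f -> C1k m V g -> C1k m V (fun x => f x + g x).
Proof.
revert f g; induction m as [|m IH]; intros f g [fc fk] [gc gk].
- split; [|exact I]. intros; apply (continuous_plus f g); auto.
- destruct fk as [fd fk], gk as [gd gk]. split; [|split].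
  + intros; apply (continuous_plus f g); auto.
  + intros; apply (ex_derive_plus f g); auto.
  + apply (C1k_ext m (fun x => Derive f x + Derive g x)); auto.
    intros x Vx. symmetry. apply Derive_plus; auto.
Qed.

Lemma C1k_opp m f : C1k m V f -> C1k m V (fun x => - f x).
Proof.
revert f; induction m as [|m IH]; intros f [fc fk].
- split; [|exact I]. intros; apply (continuous_opp f); auto.
- destruct fk as [fd fk]. split; [|split].
  + intros; apply (continuous_opp f); auto.
  + intros; apply (ex_derive_opp f); auto.
  + apply (C1k_ext m (fun x => - Derive f x)); auto.
    intros x Vx. symmetry. apply Derive_opp.
Qed.

Lemma C1k_mult m f g : C1k m V f -> C1k m V g -> C1k m V (fun x => f x * g x).
Proof.
revert f g; induction m as [|m IH]; intros f g Cf Cg.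
- split; [|exact I]. intros; apply (continuous_mult f g); eapply C1k_continuous; eauto.
- pose proof (C1k_pred _ _ Cf) as Cf'. pose proof (C1k_pred _ _ Cg) as Cg'.
  destruct Cf as [fc [fd fk]], Cg as [gc [gd gk]]. split; [|split].
  + intros; apply (continuous_mult f g); auto.
  + intros; apply (ex_derive_mult f g); auto.
  + apply (C1k_ext m (fun x => Derive f x * g x + f x * Derive g x)).
    * intros x Vx. symmetry. apply Derive_mult; auto.
    * apply C1k_plus; auto.
Qed.

Lemma C1k_inv m g : (forall x, V x -> g x <> 0) -> C1k m V g -> C1k m V (fun x => / g x).
Proof.
intros gnz. revert g gnz; induction m as [|m IH]; intros g gnz Cg.
- split; [|exact I]. intros; apply (continuous_Rinv_comp g); auto.
  eapply C1k_continuous; eauto.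
- pose proof (C1k_pred _ _ Cg) as Cg'. destruct Cg as [gc [gd gk]]. split; [|split].
  + intros; apply (continuous_Rinv_comp g); auto.
  + intros; apply (ex_derive_inv g); auto.
  + apply (C1k_ext m (fun x => - Derive g x * (/ g x * / g x))).
    * intros x Vx. rewrite Derive_inv by auto. field. auto.
    * apply C1k_mult; auto. apply C1k_opp; auto. apply C1k_mult; auto.
Qed.

End OneVariable.

Lemma C2k_pred m U f : C2k (S m) U f -> C2k m U f.
Proof.
revert f; induction m as [|m IH]; intros f [fc [fd [fx fy]]].
- split; [exact fc | exact I].
- split; [exact fc | split; [exact fd | split; apply IH; assumption]].
Qed.

Lemma C2k_le m n U f : (m <= n)%nat -> C2k n U f -> C2k m U f.
Proof. induction 1; auto. intros; apply IHle, C2k_pred; auto. Qed.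

Lemma C2k_continuous m U f :
  C2k m U f -> forall p, U p -> continuous (fun q : R * R => f (fst q) (snd q)) p.
Proof. destruct m; intros [fc _]; exact fc. Qed.

Lemma C2k_partials m U f : C2k (S m) U f ->
  (forall p, U p -> ex_derive (fun x => f x (snd p)) (fst p)
                 /\ ex_derive (fun y => f (fst p) y) (snd p))
  /\ C2k m U (partial_x f) /\ C2k m U (partial_y f).
Proof. intros [_ H]; exact H. Qed.

Lemma C2k_differentiable m U f x y : open U -> U (x, y) -> C2k (S m) U f ->
  differentiable_pt_lim f x y (partial_x f x y) (partial_y f x y).
Proof.
intros U_open Uxy Cf. destruct (C2k_partials _ _ _ Cf) as [fd [Cfx _]].
apply filterdiff_differentiable_pt_lim.
apply (is_derive_filterdiff f x y (partial_x f)).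
- apply (filter_imp U); [|exact (U_open _ Uxy)].
  intros p Up. apply Derive_correct, (proj1 (fd p Up)).
- apply Derive_correct, (proj2 (fd (x, y) Uxy)).
- exact (C2k_continuous _ _ _ Cfx _ Uxy).
Qed.

Lemma is_derive_C2k_comp m U f h x : open U -> U (x, h x) -> C2k (S m) U f ->
  ex_derive h x ->
  is_derive (fun x => f x (h x)) x (partial_x f x (h x) + partial_y f x (h x) * Derive h x).
Proof.
intros U_open Ux Cf hd. apply is_derive_Reals.
rewrite <- (Rmult_1_r (partial_x f x (h x))).
apply (derivable_pt_lim_comp_2d f (fun x => x) h).
- exact (C2k_differentiable m U f x (h x) U_open Ux Cf).
- apply derivable_pt_lim_id.
- apply is_derive_Reals, Derive_correct, hd.
Qed.

Lemma C1k_C2k_comp m U V f h : open U -> open V -> C2k m U f -> C1k m V h ->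
  (forall x, V x -> U (x, h x)) -> C1k m V (fun x => f x (h x)).
Proof.
intros U_open V_open. revert f h; induction m as [|m IH]; intros f h Cf Ch hU.
all: assert (fc : forall x, V x -> continuous (fun x => f x (h x)) x)
  by (intros x Vx; apply (continuous_comp_2 (fun x => x) h f x);
      [apply continuous_id | exact (C1k_continuous _ _ _ Ch x Vx)
      | exact (C2k_continuous _ _ _ Cf _ (hU x Vx))]).
- split; [exact fc | exact I].
- destruct (C2k_partials _ _ _ Cf) as [_ [Cfx Cfy]].
  pose proof (C1k_pred _ _ _ Ch) as Ch'. destruct Ch as [_ [hd Ch'']].
  split; [exact fc | split].
  + intros x Vx. eexists. apply (is_derive_C2k_comp m U); auto.
  + apply (C1k_ext V V_open m
      (fun x => partial_x f x (h x) + partial_y f x (h x) * Derive h x)).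
    * intros x Vx. symmetry. apply is_derive_unique, (is_derive_C2k_comp m U); auto.
    * apply C1k_plus; auto. apply C1k_mult; auto.
Qed.

(** * Roots of monotone families and implicit functions *)

Definition strictly_increasing_on (G : R -> R) a b :=
  forall v1 v2, a <= v1 -> v1 < v2 -> v2 <= b -> G v1 < G v2.

Lemma strictly_increasing_on_inj G a b v1 v2 : strictly_increasing_on G a b ->
  a <= v1 <= b -> a <= v2 <= b -> G v1 = G v2 -> v1 = v2.
Proof.
intros Ginc h1 h2 e. destruct (Rtotal_order v1 v2) as [l|[l|l]]; auto.
- pose proof (Ginc v1 v2 ltac:(lra) l ltac:(lra)). lra.
- pose proof (Ginc v2 v1 ltac:(lra) l ltac:(lra)). lra.
Qed.

Lemma strictly_increasing_on_root_between G a b l h v : strictly_increasing_on G a b ->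
  a <= l <= b -> a <= h <= b -> a <= v <= b -> G l < 0 -> 0 < G h -> G v = 0 -> l < v < h.
Proof.
intros Ginc hl hh hv Gl Gh Gv. split.
- destruct (Rlt_le_dec l v) as [lt|le]; auto.
  destruct (Req_dec v l) as [->|ne]; [lra|]. pose proof (Ginc v l ltac:(lra) ltac:(lra)). lra.
- destruct (Rlt_le_dec v h) as [lt|le]; auto.
  destruct (Req_dec v h) as [->|ne]; [lra|]. pose proof (Ginc h v ltac:(lra) ltac:(lra)). lra.
Qed.

Lemma continuous_lt_near (f : R -> R) x c : continuous f x -> f x < c ->
  locally x (fun y => f y < c).
Proof. intros fc fx. exact (fc _ (open_lt c (f x) fx)). Qed.

Lemma continuous_gt_near (f : R -> R) x c : continuous f x -> c < f x ->
  locally x (fun y => c < f y).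
Proof. intros fc fx. exact (fc _ (open_gt c (f x) fx)). Qed.

Lemma continuous_root_family (H : R -> R -> R) lo hi a b : a < b ->
  (forall p, lo < p < hi -> strictly_increasing_on (H p) a b) ->
  (forall p, lo < p < hi -> H p a < 0 /\ 0 < H p b) ->
  (forall p v, lo < p < hi -> a <= v <= b -> continuity_pt (H p) v) ->
  (forall p v, lo < p < hi -> a <= v <= b -> continuous (fun q => H q v) p) ->
  exists r : R -> R, forall p, lo < p < hi ->
    a < r p < b /\ H p (r p) = 0 /\ continuous r p.
Proof.
intros ab Hinc Hsign Hcont Hcontp.
assert (root : forall p, exists v, lo < p < hi -> a <= v <= b /\ H p v = 0).
{ intros p. destruct (classic (lo < p < hi)) as [hp|hp]; [|exists a; tauto].
  destruct (Hsign p hp). destruct (IVT_interv (H p) a b (fun v => Hcont p v hp) ab) as [v hv]; auto.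
  exists v; auto. }
set (r := fun p => proj1_sig (constructive_indefinite_description _ (root p))).
assert (r_spec : forall p, lo < p < hi -> a <= r p <= b /\ H p (r p) = 0).
{ intros p hp. unfold r. destruct constructive_indefinite_description as [v hv]; auto. }
assert (r_between : forall p l h, lo < p < hi -> a <= l <= b -> a <= h <= b ->
          H p l < 0 -> 0 < H p h -> l < r p < h).
{ intros p l h hp hl hh Hl Hh. destruct (r_spec p hp) as [rb r0].
  exact (strictly_increasing_on_root_between _ a b l h _ (Hinc p hp) hl hh rb Hl Hh r0). }
exists r. intros p hp. destruct (Hsign p hp) as [Ha Hb].
split; [apply (r_between p a b); auto; lra|]. split; [apply r_spec; auto|].
apply (proj1 (continuity_pt_filterlim r p)), continuity_pt_locally. intros eps.
set (l := Rmax a (r p - eps / 2)). set (h := Rmin b (r p + eps / 2)).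
assert (pos := cond_pos eps).
assert (rl : r p - eps / 2 <= l) by apply Rmax_r. assert (rh : h <= r p + eps / 2) by apply Rmin_r.
destruct (r_spec p hp) as [rb r0].
assert (Hl : H p l < 0).
{ unfold l, Rmax; destruct Rle_dec; auto.
  rewrite <- r0. apply (Hinc p hp); lra. }
assert (Hh : 0 < H p h).
{ unfold h, Rmin; destruct Rle_dec; auto.
  rewrite <- r0. apply (Hinc p hp); lra. }
assert (near_p : locally p (fun q => lo < q < hi)).
{ apply (locally_interval _ p lo hi); simpl; auto; lra. }
assert (lb : a <= l <= b) by (unfold l, Rmax; destruct Rle_dec; lra).
assert (hb' : a <= h <= b) by (unfold h, Rmin; destruct Rle_dec; lra).
generalize (filter_and _ _ near_p (filter_and _ _
  (continuous_lt_near _ p 0 (Hcontp p l hp lb) Hl)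
  (continuous_gt_near _ p 0 (Hcontp p h hp hb') Hh))).
apply filter_imp. intros q [hq [Hql Hqh]].
pose proof (r_between q l h hq lb hb' Hql Hqh).
pose proof (r_between p l h hp lb hb' Hl Hh).
apply Rabs_lt_between. lra.
Qed.

Lemma linear_error_bound A B h D q : B <> 0 -> 0 <= q <= 1 / 2 ->
  Rabs (A * h + B * D) <= q * Rabs B * (Rabs h + Rabs D) ->
  Rabs (D + A / B * h) <= 2 * q * (1 + Rabs (A / B)) * Rabs h.
Proof.
intros Bnz hq hAB. pose proof (Rabs_pos_lt B Bnz) as Bpos.
replace (A * h + B * D) with (B * (D + A / B * h)) in hAB by (field; auto).
rewrite Rabs_mult in hAB.
assert (X_le : Rabs (D + A / B * h) <= q * (Rabs h + Rabs D)).
{ apply (Rmult_le_reg_l (Rabs B)); auto. lra. }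
assert (D_le : Rabs D <= Rabs (D + A / B * h) + Rabs (A / B) * Rabs h).
{ replace D with ((D + A / B * h) + - (A / B * h)) at 1 by ring.
  rewrite <- Rabs_mult, <- (Rabs_Ropp (A / B * h)). apply Rabs_triang. }
pose proof (Rabs_pos (A / B)). pose proof (Rabs_pos h).
pose proof (Rabs_pos (D + A / B * h)). nra.
Qed.

Lemma is_derive_implicit (F : R -> R -> R) (g : R -> R) s0 A B :
  differentiable_pt_lim F s0 (g s0) A B -> B <> 0 -> continuous g s0 ->
  locally s0 (fun s => F s (g s) = 0) ->
  is_derive g s0 (- (A / B)).
Proof.
intros FD Bnz gc Fg0. apply is_derive_Reals. intros eps epos.
set (L := Rabs (A / B)). pose proof (Rabs_pos (A / B)) as Lpos. fold L in Lpos.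
set (q := Rmin (1 / 2) (eps / (4 * (1 + L)))).
assert (qpos : 0 < q) by (apply Rmin_pos; [lra | apply Rdiv_lt_0_compat; lra]).
assert (qle : q <= 1 / 2) by apply Rmin_l.
assert (qeps : 2 * q * (1 + L) <= eps / 2).
{ assert (q <= eps / (4 * (1 + L))) by apply Rmin_r.
  replace (eps / 2) with (2 * (eps / (4 * (1 + L))) * (1 + L)) by (field; lra). nra. }
pose proof (Rabs_pos_lt B Bnz).
destruct (FD (mkposreal (q * Rabs B) ltac:(apply Rmult_lt_0_compat; auto))) as [d Fd].
simpl in Fd.
assert (gd : locally s0 (fun s => Rabs (g s - g s0) < d)) by exact (gc _ (locally_ball (g s0) d)).
destruct (filter_and _ _ Fg0 gd) as [delta hdelta].
exists (mkposreal (Rmin delta d) (Rmin_pos _ _ (cond_pos delta) (cond_pos d))).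
simpl. intros h hnz hh.
assert (hball : ball s0 delta (s0 + h)).
{ unfold ball; simpl; unfold AbsRing_ball, abs, minus, plus, opp; simpl.
  replace (s0 + h + - s0) with h by ring. apply (Rlt_le_trans _ _ _ hh), Rmin_l. }
destruct (hdelta _ hball) as [Fsh gsh].
assert (hd : Rabs (s0 + h - s0) < d)
  by (replace (s0 + h - s0) with h by ring; apply (Rlt_le_trans _ _ _ hh), Rmin_r).
specialize (Fd _ _ hd gsh).
rewrite Fsh, (locally_singleton _ _ Fg0) in Fd. replace (s0 + h - s0) with h in Fd by ring.
set (D := g (s0 + h) - g s0) in *.
assert (err : Rabs (A * h + B * D) <= q * Rabs B * (Rabs h + Rabs D)).
{ replace (A * h + B * D) with (- (0 - 0 - (A * h + B * D))) by ring. rewrite Rabs_Ropp.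
  apply (Rle_trans _ _ _ Fd), Rmult_le_compat_l; [apply Rlt_le, Rmult_lt_0_compat; auto|].
  unfold Rmax; destruct Rle_dec; pose proof (Rabs_pos h); pose proof (Rabs_pos D); lra. }
pose proof (linear_error_bound A B h D q Bnz ltac:(lra) err) as bound. fold L in bound.
pose proof (Rabs_pos_lt h hnz).
replace (D / h - - (A / B)) with ((D + A / B * h) / h) by (field; auto).
unfold Rdiv. rewrite Rabs_mult, Rabs_inv.
apply (Rmult_lt_reg_r (Rabs h)); auto.
rewrite Rmult_assoc, Rinv_l, Rmult_1_r by lra. nra.
Qed.

Lemma C1k_implicit n (F : R -> R -> R) (U : R * R -> Prop) (V : R -> Prop) (g : R -> R) :
  open U -> open V -> C2k n U F ->
  (forall s, V s -> U (s, g s)) ->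
  (forall s, V s -> F s (g s) = 0) ->
  (forall s, V s -> continuous g s) ->
  (forall s, V s -> partial_y F s (g s) <> 0) ->
  C1k n V g.
Proof.
intros U_open V_open CF gU Fg gc Fy_nz.
destruct n as [|n]; [split; [exact gc | exact I]|].
destruct (C2k_partials _ _ _ CF) as [_ [CFx CFy]].
assert (dg : forall s, V s ->
          is_derive g s (- partial_x F s (g s) * / partial_y F s (g s))).
{ intros s Vs. rewrite Ropp_mult_distr_l_reverse.
  apply (is_derive_implicit F g s); auto.
  - exact (C2k_differentiable n U F s (g s) U_open (gU s Vs) CF).
  - exact (filter_imp _ _ Fg (V_open s Vs)). }
assert (K : forall m, (m <= S n)%nat -> C1k m V g).
{ induction m as [|m IH]; intros hm; [split; [exact gc | exact I]|].
  split; [exact gc | split].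
  - intros s Vs. eexists. exact (dg s Vs).
  - apply (C1k_ext V V_open m (fun s => - partial_x F s (g s) * / partial_y F s (g s))).
    + intros s Vs. symmetry. apply is_derive_unique, dg, Vs.
    + assert (Cm : forall f, C2k n U f -> C1k m V (fun s => f s (g s)))
        by (intros f Cf; apply (C1k_C2k_comp m U V);
            [auto | auto | apply (C2k_le m n); [lia | auto] | apply IH; lia | auto]).
      apply C1k_mult, C1k_inv; auto. apply C1k_opp; auto. }
apply K; lia.
Qed.

Lemma IVT_sign_change (f : R -> R) a b : a < b ->
  (forall x, a <= x <= b -> continuity_pt f x) -> f a * f b < 0 ->
  exists z, a <= z <= b /\ f z = 0.
Proof.
intros ab fc sign. destruct (Rlt_dec (f a) 0) as [fa|fa].
- destruct (IVT_interv f a b fc ab fa ltac:(nra)) as [z hz]. exists z; exact hz.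
- assert (gc : forall x, a <= x <= b -> continuity_pt (fun x => - f x) x)
    by (intros x hx; apply continuity_pt_opp, fc, hx).
  assert (f a <> 0) by (intros e; rewrite e in sign; lra).
  assert (0 < f a) by lra. assert (f b < 0) by nra.
  destruct (IVT_interv (fun x => - f x) a b gc ab ltac:(lra) ltac:(lra)) as [z [hz fz]].
  exists z. split; auto. lra.
Qed.

(** * Closed curves close to the unit circle *)

Lemma Rabs_rotation_le a b p : Rabs (a * cos p - b * sin p) <= Rabs a + Rabs b.
Proof.
unfold Rminus. apply (Rle_trans _ _ _ (Rabs_triang _ _)).
rewrite Rabs_Ropp, !Rabs_mult.
pose proof (Rabs_pos a). pose proof (Rabs_pos b).
assert (Rabs (cos p) <= 1) by (apply Rabs_le, COS_bound).
assert (Rabs (sin p) <= 1) by (apply Rabs_le, SIN_bound).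
nra.
Qed.

(* The numerical constants are convenient choices, scaled by the small parameter [w]. *)
Record circle_like_loop (X Y : R -> R) (alpha beta T w mu : R) : Prop := {
  loop_w : 0 < w <= 1 / 64;
  loop_alpha : alpha <= - 64 * w;
  loop_beta : 2 * PI + 64 * w <= beta;
  loop_T : 0 < T < beta;
  loop_mu : 0 <= mu <= w / 8;
  loop_deriv : forall t, - 32 * w < t < beta - 8 * w ->
    ex_derive X t /\ ex_derive Y t /\
    Rabs (Derive X t + sin t) <= 1 / 8 /\ Rabs (Derive Y t - cos t) <= 1 / 8;
  loop_close : forall t, alpha < t < beta ->
    Rabs (X t - cos t) <= mu /\ Rabs (Y t - sin t) <= mu;
  loop_periodic : forall t, alpha < t < beta -> alpha < t + T < beta ->
    X (t + T) = X t /\ Y (t + T) = Y t;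
  loop_simple : forall u1 u2, 0 <= u1 < T -> 0 <= u2 < T ->
    X u1 = X u2 -> Y u1 = Y u2 -> u1 = u2 }.

Lemma exists_max_index (r : nat -> R) n :
  exists m, (m <= n)%nat /\ forall j, (j <= n)%nat -> r j <= r m.
Proof.
induction n as [|n [m [hm max]]].
- exists 0%nat. split; auto. intros j hj. replace j with 0%nat by lia. lra.
- destruct (Rle_dec (r (S n)) (r m)).
  + exists m. split; [lia|]. intros j hj.
    destruct (Nat.eq_dec j (S n)) as [->|]; auto. apply max; lia.
  + exists (S n). split; auto. intros j hj.
    destruct (Nat.eq_dec j (S n)) as [->|]; [lra|]. pose proof (max j ltac:(lia)). lra.
Qed.

Lemma exists_strict_local_extremum (r : nat -> R) k : (2 <= k)%nat ->
  (forall i j, (i < j < k)%nat -> r i <> r j) -> r k = r 0%nat ->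
  exists m, (m + 2 <= k)%nat /\ (r m - r (S m)) * (r (S m) - r (S (S m))) < 0.
Proof.
intros hk distinct wrap.
assert (turn : forall r : nat -> R, (forall i j, (i < j < k)%nat -> r i <> r j) ->
          r k = r 0%nat -> r 0%nat < r 1%nat ->
          exists m, (m + 2 <= k)%nat /\ (r m - r (S m)) * (r (S m) - r (S (S m))) < 0).
{ clear r distinct wrap. intros r distinct wrap r01.
  destruct (exists_max_index r (k - 1)) as [[|m] [hm max]].
  { pose proof (max 1%nat ltac:(lia)). lra. }
  exists m. split; [lia|].
  assert (r m < r (S m)).
  { pose proof (max m ltac:(lia)). pose proof (distinct m (S m) ltac:(lia)). lra. }
  assert (r (S (S m)) < r (S m)).
  { destruct (Nat.eq_dec (S (S m)) k) as [e|ne].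
    - rewrite e, wrap. pose proof (max 0%nat ltac:(lia)).
      pose proof (distinct 0%nat (S m) ltac:(lia)). lra.
    - pose proof (max (S (S m)) ltac:(lia)). pose proof (distinct (S m) (S (S m)) ltac:(lia)).
      lra. }
  nra. }
destruct (Rlt_dec (r 0%nat) (r 1%nat)) as [lt|nlt]; [apply turn; auto|].
destruct (turn (fun i => - r i)) as [m [hm ext]].
- intros i j hij e. apply (distinct i j hij). lra.
- rewrite wrap; auto.
- pose proof (distinct 0%nat 1%nat ltac:(lia)). lra.
- exists m. split; auto. nra.
Qed.

Section Loop.

Variables (X Y : R -> R) (alpha beta T w mu : R).
Hypothesis L : circle_like_loop X Y alpha beta T w mu.

(* Coordinates of the point of parameter [p + v] in the frame rotated by the angle [p]. *)
Definition cross_ray p v := Y (p + v) * cos p - X (p + v) * sin p.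
Definition radial p v := X (p + v) * cos p + Y (p + v) * sin p.

Lemma point_on_ray p v : cross_ray p v = 0 ->
  X (p + v) = radial p v * cos p /\ Y (p + v) = radial p v * sin p.
Proof.
intros e. pose proof (sin2_cos2 p) as one. unfold Rsqr in one.
assert (eX : X (p + v) - radial p v * cos p
             = X (p + v) * (1 - (sin p * sin p + cos p * cos p)) - sin p * cross_ray p v)
  by (unfold radial, cross_ray; ring).
assert (eY : Y (p + v) - radial p v * sin p
             = Y (p + v) * (1 - (sin p * sin p + cos p * cos p)) + cos p * cross_ray p v)
  by (unfold radial, cross_ray; ring).
rewrite one, e, Rminus_diag, !Rmult_0_r in eX, eY. lra.
Qed.

Lemma same_point_on_ray p q v v' : cross_ray p v = 0 -> cross_ray q v' = 0 ->
  cos p = cos q -> sin p = sin q -> radial p v = radial q v' ->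
  X (p + v) = X (q + v') /\ Y (p + v) = Y (q + v').
Proof.
intros ep eq ec es er. destruct (point_on_ray p v ep), (point_on_ray q v' eq).
split; congruence.
Qed.

Lemma cross_ray_increasing p : - 29 * w < p < beta - 11 * w ->
  strictly_increasing_on (cross_ray p) (- 2 * w) (2 * w).
Proof.
intros hp. pose proof (loop_w _ _ _ _ _ _ _ L).
set (df := fun v => Derive Y (p + v) * cos p - Derive X (p + v) * sin p).
intros v1 v2 hv1 hv12 hv2.
apply (incr_function (cross_ray p) (- 3 * w) (3 * w) df); simpl; try lra.
- intros v hv hv'. destruct (loop_deriv _ _ _ _ _ _ _ L (p + v) ltac:(lra)) as [dX [dY _]].
  unfold cross_ray, df. auto_derive; [tauto|].
  change (fun x => Y x) with Y; change (fun x => X x) with X; ring.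
- intros v hv hv'. unfold df.
  destruct (loop_deriv _ _ _ _ _ _ _ L (p + v) ltac:(lra)) as [_ [_ [bX bY]]].
  assert (cv : 1 - v ^ 2 / 2 <= cos v) by (apply cos_ge_quadratic; lra).
  assert (rot : cos (p + v) * cos p + sin (p + v) * sin p = cos v)
    by (rewrite <- cos_minus; f_equal; ring).
  pose proof (Rabs_rotation_le (Derive Y (p + v) - cos (p + v))
                               (Derive X (p + v) + sin (p + v)) p) as err.
  apply Rabs_le_between in err. nra.
Qed.

Lemma cross_ray_sign p : - 29 * w < p < beta - 11 * w ->
  cross_ray p (- w) < 0 /\ 0 < cross_ray p w.
Proof.
intros hp. pose proof (loop_w _ _ _ _ _ _ _ L). pose proof (loop_mu _ _ _ _ _ _ _ L).
pose proof (loop_alpha _ _ _ _ _ _ _ L).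
assert (near_sin : forall v, - w <= v <= w -> Rabs (cross_ray p v - sin v) <= w / 4).
{ intros v hv. destruct (loop_close _ _ _ _ _ _ _ L (p + v) ltac:(lra)) as [cX cY].
  assert (rot : sin (p + v) * cos p - cos (p + v) * sin p = sin v)
    by (rewrite <- sin_minus; f_equal; ring).
  replace (cross_ray p v - sin v)
    with ((Y (p + v) - sin (p + v)) * cos p - (X (p + v) - cos (p + v)) * sin p)
    by (unfold cross_ray; rewrite <- rot; ring).
  apply (Rle_trans _ _ _ (Rabs_rotation_le _ _ _)). lra. }
pose proof (sin_ge_half w ltac:(lra)).
pose proof (near_sin (- w) ltac:(lra)) as lo. pose proof (near_sin w ltac:(lra)) as hi.
rewrite sin_neg in lo. apply Rabs_le_between in lo. apply Rabs_le_between in hi. lra.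
Qed.

Lemma cross_ray_root : exists r : R -> R, forall p, - 29 * w < p < beta - 11 * w ->
  - w < r p < w /\ cross_ray p (r p) = 0 /\ continuous r p.
Proof.
pose proof (loop_w _ _ _ _ _ _ _ L).
assert (dXY : forall p v, - 29 * w < p < beta - 11 * w -> - w <= v <= w ->
          ex_derive X (p + v) /\ ex_derive Y (p + v))
  by (intros p v hp hv; destruct (loop_deriv _ _ _ _ _ _ _ L (p + v) ltac:(lra)); tauto).
apply (continuous_root_family cross_ray); try lra.
- intros p hp v1 v2 h1 h12 h2. apply (cross_ray_increasing p hp); lra.
- exact cross_ray_sign.
- intros p v hp hv. apply continuity_pt_filterlim, (ex_derive_continuous (cross_ray p)).
  destruct (dXY p v hp hv). unfold cross_ray. auto_derive. tauto.
- intros p v hp hv. apply (ex_derive_continuous (fun q => cross_ray q v)).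
  destruct (dXY p v hp hv). unfold cross_ray. auto_derive. tauto.
Qed.

Lemma loop_no_double_point u1 u2 : - T < u1 -> alpha < u1 -> u1 < u2 -> u2 < T ->
  u2 < u1 + T -> X u1 = X u2 -> Y u1 = Y u2 -> False.
Proof.
intros h1 h2 h12 h3 h4 eX eY. pose proof (loop_T _ _ _ _ _ _ _ L).
pose proof (loop_simple _ _ _ _ _ _ _ L) as simple.
destruct (Rlt_le_dec u1 0) as [n1|p1].
- destruct (loop_periodic _ _ _ _ _ _ _ L u1 ltac:(lra) ltac:(lra)) as [p1 q1].
  destruct (Rlt_le_dec u2 0) as [n2|p2].
  + destruct (loop_periodic _ _ _ _ _ _ _ L u2 ltac:(lra) ltac:(lra)) as [p2 q2].
    assert (u1 + T = u2 + T) by (apply simple; try lra; congruence). lra.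
  + assert (u1 + T = u2) by (apply simple; try lra; congruence). lra.
- assert (u1 = u2) by (apply simple; auto; lra). lra.
Qed.

Lemma loop_Y_increasing_at p : - 29 * w < p < beta - 11 * w -> cos p = 1 -> sin p = 0 ->
  strictly_increasing_on (fun v => Y (p + v)) (- 2 * w) (2 * w).
Proof.
intros hp c1 s0 v1 v2 h1 h12 h2.
pose proof (cross_ray_increasing p hp v1 v2 h1 h12 h2) as incr.
unfold cross_ray in incr. rewrite c1, s0 in incr. lra.
Qed.

Section RayRoot.

Variable r : R -> R.
Hypothesis r_spec : forall p, - 29 * w < p < beta - 11 * w ->
  - w < r p < w /\ cross_ray p (r p) = 0 /\ continuous r p.

Lemma ray_root_unique p v : - 29 * w < p < beta - 11 * w ->
  Rabs v <= 2 * w -> cross_ray p v = 0 -> v = r p.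
Proof.
intros hp hv e. destruct (r_spec p hp) as [rb [r0 _]]. pose proof (loop_w _ _ _ _ _ _ _ L).
apply Rabs_le_between in hv.
apply (strictly_increasing_on_inj _ _ _ _ _ (cross_ray_increasing p hp)); lra || congruence.
Qed.

Lemma radial_root_continuous p : - 29 * w < p < beta - 11 * w ->
  continuous (fun q => radial q (r q)) p.
Proof.
intros hp. destruct (r_spec p hp) as [rb [_ rc]].
destruct (loop_deriv _ _ _ _ _ _ _ L (p + r p) ltac:(lra)) as [dX [dY _]].
assert (shift : continuous (fun q => q + r q) p)
  by (apply (continuous_plus (fun q => q) r); auto; apply continuous_id).
assert (along : forall f : R -> R, ex_derive f (p + r p) -> continuous (fun q => f (q + r q)) p)
  by (intros f df; apply (continuous_comp (fun q => q + r q) f); auto;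
      apply (ex_derive_continuous f); auto).
assert (cos_c : continuous cos p) by (apply (ex_derive_continuous cos); auto_derive; auto).
assert (sin_c : continuous sin p) by (apply (ex_derive_continuous sin); auto_derive; auto).
unfold radial.
apply (continuous_plus (fun q => X (q + r q) * cos q) (fun q => Y (q + r q) * sin q)).
- apply (continuous_mult (fun q => X (q + r q)) cos); auto.
- apply (continuous_mult (fun q => Y (q + r q)) sin); auto.
Qed.

Section Winding.

Variable k : nat.
Hypothesis k_ge_2 : (2 <= k)%nat.
Hypothesis T_near : Rabs (T - 2 * INR k * PI) <= w / 2.

Let lap j := - 16 * w + 2 * INR j * PI.
Let radius j := radial (lap j) (r (lap j)).

Lemma lap_in_range p : - 16 * w <= p <= lap k + 2 * w -> - 29 * w < p < beta - 11 * w.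
Proof.
pose proof (loop_w _ _ _ _ _ _ _ L). pose proof (loop_T _ _ _ _ _ _ _ L).
pose proof (proj1 (Rabs_le_between _ _) T_near). unfold lap. lra.
Qed.

Lemma radius_wrap : radius k = radius 0%nat.
Proof.
pose proof (loop_w _ _ _ _ _ _ _ L). pose proof (loop_alpha _ _ _ _ _ _ _ L).
pose proof (loop_T _ _ _ _ _ _ _ L). pose proof PI_gt_3.
pose proof (proj1 (Rabs_le_between _ _) T_near).
assert (hk : 2 <= INR k) by (replace 2 with (INR 2) by (simpl; ring); apply le_INR; auto).
assert (0 <= INR k * PI) by (apply Rmult_le_pos; lra).
assert (l0 : lap 0%nat = - 16 * w) by (unfold lap; simpl; ring).
set (c := - 16 * w) in *.
destruct (r_spec c (lap_in_range c ltac:(unfold lap, c; lra))) as [rb [r0 _]].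
assert (trig : cos (lap k) = cos c /\ sin (lap k) = sin c)
  by (unfold lap; rewrite cos_period, sin_period; auto).
destruct trig as [ck sk].
set (v := r c + (T - 2 * INR k * PI)).
assert (ev : lap k + v = (c + r c) + T) by (unfold lap, v, c; ring).
assert (hc : alpha < c + r c < beta /\ alpha < c + r c + T < beta) by (unfold c in *; lra).
destruct (loop_periodic _ _ _ _ _ _ _ L (c + r c) (proj1 hc) (proj2 hc)) as [pX pY].
assert (vk : v = r (lap k)).
{ apply ray_root_unique.
  - apply lap_in_range; unfold lap, c; lra.
  - apply Rabs_le. unfold v. lra.
  - unfold cross_ray. rewrite ev, pX, pY, ck, sk. exact r0. }
unfold radius, radial. rewrite <- vk, ev, pX, pY, ck, sk, l0. reflexivity.
Qed.

Lemma radius_distinct i j : (i < j < k)%nat -> radius i <> radius j.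
Proof.
intros hij e. pose proof (loop_w _ _ _ _ _ _ _ L). pose proof (loop_alpha _ _ _ _ _ _ _ L).
pose proof (loop_T _ _ _ _ _ _ _ L). pose proof PI_gt_3.
pose proof (proj1 (Rabs_le_between _ _) T_near).
assert (ij : INR i + 1 <= INR j) by (rewrite <- S_INR; apply le_INR; lia).
assert (jk : INR j + 1 <= INR k) by (rewrite <- S_INR; apply le_INR; lia).
pose proof (pos_INR i).
destruct (r_spec (lap i) (lap_in_range (lap i) ltac:(unfold lap; nra))) as [bi [ri _]].
destruct (r_spec (lap j) (lap_in_range (lap j) ltac:(unfold lap; nra))) as [bj [rj _]].
assert (trig : forall l, cos (lap l) = cos (- 16 * w) /\ sin (lap l) = sin (- 16 * w))
  by (intros l; unfold lap; rewrite cos_period, sin_period; auto).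
destruct (trig i), (trig j).
destruct (same_point_on_ray _ _ _ _ ri rj ltac:(congruence) ltac:(congruence) e) as [eX eY].
assert (PI <= INR j * PI - INR i * PI) by nra.
assert (INR j * PI + PI <= INR k * PI) by nra.
assert (0 <= INR i * PI) by nra.
apply (loop_no_double_point (lap i + r (lap i)) (lap j + r (lap j))); auto; unfold lap in *; lra.
Qed.

(* Turning the ray once around shifts the laps by one, so the gap between laps [m] and
   [m + 1] changes sign and these two laps meet. *)
Lemma no_turning_lap m : (m + 2 <= k)%nat ->
  (radius m - radius (S m)) * (radius (S m) - radius (S (S m))) < 0 -> False.
Proof.
intros hm turn. pose proof (loop_w _ _ _ _ _ _ _ L). pose proof (loop_alpha _ _ _ _ _ _ _ L).
pose proof (loop_T _ _ _ _ _ _ _ L). pose proof PI_gt_3.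
pose proof (proj1 (Rabs_le_between _ _) T_near).
assert (mk : INR m + 2 <= INR k)
  by (replace 2 with (INR 2) by (simpl; ring); rewrite <- plus_INR; apply le_INR; lia).
pose proof (pos_INR m).
set (at_lap psi j := psi + 2 * INR j * PI).
assert (next : forall psi j, at_lap (psi + 2 * PI) j = at_lap psi (S j))
  by (intros; unfold at_lap; rewrite S_INR; ring).
assert (range : forall psi j, - 16 * w <= psi <= - 16 * w + 2 * PI -> (j <= S m)%nat ->
          - 29 * w < at_lap psi j < beta - 11 * w).
{ intros psi j hpsi hj. apply lap_in_range. pose proof (pos_INR j).
  assert (INR j <= INR m + 1) by (rewrite <- S_INR; apply le_INR; lia).
  unfold at_lap, lap. nra. }
set (gap psi := radial (at_lap psi m) (r (at_lap psi m))
                - radial (at_lap psi (S m)) (r (at_lap psi (S m)))).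
assert (gap_c : forall psi, - 16 * w <= psi <= - 16 * w + 2 * PI -> continuity_pt gap psi).
{ intros psi hpsi. apply continuity_pt_filterlim.
  assert (lap_c : forall j, (j <= S m)%nat ->
            continuous (fun psi => radial (at_lap psi j) (r (at_lap psi j))) psi).
  { intros j hj. apply (continuous_comp (fun psi => at_lap psi j) (fun q => radial q (r q))).
    - apply (ex_derive_continuous (fun psi => at_lap psi j)). unfold at_lap. auto_derive. auto.
    - apply radial_root_continuous, range; auto. }
  apply (continuous_minus (fun psi => radial (at_lap psi m) (r (at_lap psi m))));
    apply lap_c; lia. }
destruct (IVT_sign_change gap (- 16 * w) (- 16 * w + 2 * PI)) as [psi [hpsi zero]].
- lra.
- exact gap_c.
- unfold gap. rewrite !next. exact turn.
- destruct (r_spec _ (range psi m hpsi ltac:(lia))) as [b1 [r1 _]].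
  destruct (r_spec _ (range psi (S m) hpsi ltac:(lia))) as [b2 [r2 _]].
  assert (trig : forall j, cos (at_lap psi j) = cos psi /\ sin (at_lap psi j) = sin psi)
    by (intros j; unfold at_lap; rewrite cos_period, sin_period; auto).
  destruct (trig m), (trig (S m)).
  destruct (same_point_on_ray _ _ _ _ r1 r2 ltac:(congruence) ltac:(congruence)
              ltac:(unfold gap in zero; lra)) as [eX eY].
  assert (INR m * PI + 2 * PI <= INR k * PI) by nra.
  assert (0 <= INR m * PI) by nra.
  apply (loop_no_double_point (at_lap psi m + r (at_lap psi m))
           (at_lap psi (S m) + r (at_lap psi (S m)))); auto;
    unfold at_lap in *; rewrite ?S_INR in *; lra.
Qed.

Lemma no_multiple_winding : False.
Proof.
destruct (exists_strict_local_extremum radius k k_ge_2) as [m [hm turn]].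
- intros i j hij. apply radius_distinct; auto.
- exact radius_wrap.
- exact (no_turning_lap m hm turn).
Qed.

End Winding.

End RayRoot.

Lemma loop_period_not_near_2kPI k : (2 <= k)%nat -> Rabs (T - 2 * INR k * PI) <= w / 2 -> False.
Proof.
intros hk hT. destruct cross_ray_root as [r r_spec]. exact (no_multiple_winding r r_spec k hk hT).
Qed.

Theorem loop_period_near_2PI : Rabs (T - 2 * PI) <= w / 2.
Proof.
pose proof (loop_w _ _ _ _ _ _ _ L). pose proof (loop_alpha _ _ _ _ _ _ _ L).
pose proof (loop_T _ _ _ _ _ _ _ L). pose proof (loop_mu _ _ _ _ _ _ _ L).
destruct (loop_periodic _ _ _ _ _ _ _ L 0 ltac:(lra) ltac:(lra)) as [pX pY].
rewrite Rplus_0_l in pX, pY.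
destruct (loop_close _ _ _ _ _ _ _ L 0 ltac:(lra)) as [cX0 cY0].
destruct (loop_close _ _ _ _ _ _ _ L T ltac:(lra)) as [cXT cYT].
rewrite cos_0 in cX0. rewrite sin_0 in cY0. rewrite pX in cXT. rewrite pY in cYT.
apply Rabs_le_between in cX0, cY0, cXT, cYT.
destruct (near_multiple_of_2PI T (2 * mu)) as [k hk]; try lra.
{ apply Rabs_le. lra. }
destruct k as [|[|k]].
- exfalso. rewrite Rmult_0_r, Rmult_0_l, Rminus_0_r in hk. apply Rabs_le_between in hk.
  pose proof (loop_beta _ _ _ _ _ _ _ L). pose proof PI_gt_3.
  pose proof (loop_Y_increasing_at 0 ltac:(lra) cos_0 sin_0 0 T ltac:(lra) ltac:(lra) ltac:(lra))
    as incr.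
  cbv beta in incr. rewrite !Rplus_0_l in incr. lra.
- simpl in hk. rewrite Rmult_1_r in hk. lra.
- exfalso. apply (loop_period_not_near_2kPI (S (S k))); [lia | lra].
Qed.

Lemma loop_period_unique_root v : Y 0 = 0 -> Rabs (v - 2 * PI) <= 2 * w -> Y v = 0 -> v = T.
Proof.
intros Y0 hv Yv. pose proof (loop_w _ _ _ _ _ _ _ L). pose proof (loop_alpha _ _ _ _ _ _ _ L).
pose proof (loop_beta _ _ _ _ _ _ _ L). pose proof (loop_T _ _ _ _ _ _ _ L). pose proof PI_gt_3.
pose proof loop_period_near_2PI as hT.
destruct (loop_periodic _ _ _ _ _ _ _ L 0 ltac:(lra) ltac:(lra)) as [_ YT].
rewrite Rplus_0_l, Y0 in YT.
apply Rabs_le_between in hv, hT.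
assert (v - 2 * PI = T - 2 * PI); [|lra].
apply (strictly_increasing_on_inj _ _ _ _ _
         (loop_Y_increasing_at (2 * PI) ltac:(lra) cos_2PI sin_2PI)); try lra.
replace (2 * PI + (v - 2 * PI)) with v by ring.
replace (2 * PI + (T - 2 * PI)) with T by ring. congruence.
Qed.

End Loop.

(** * The period of the family of curves *)

Lemma uniformly_close_to_slice (f : R -> R -> R) e a b eta : 0 < e -> 0 < eta ->
  (forall s t, 0 <= s <= e -> a <= t <= b ->
     continuous (fun q : R * R => f (fst q) (snd q)) (s, t)) ->
  exists del, 0 < del <= e /\
    forall s t, 0 <= s <= del -> a <= t <= b -> Rabs (f s t - f 0 t) < eta.
Proof.
intros he heta fc.
destruct (uniform_continuity_2d f 0 e a b) with (eps := mkposreal eta heta) as [del hdel].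
{ intros s t hs ht. apply continuity_2d_pt_filterlim, (fc s t hs ht). }
exists (Rmin e (del / 2)). pose proof (cond_pos del).
split; [split; [apply Rmin_pos; lra | apply Rmin_l]|].
intros s t hs ht. pose proof (Rmin_l e (del / 2)). pose proof (Rmin_r e (del / 2)).
apply hdel; try lra.
- rewrite Rminus_0_r, Rabs_right; lra.
- rewrite Rminus_eq_0, Rabs_R0. lra.
Qed.

Section Expansion.

Variables (eps alpha beta a K : R) (X Y : R -> R -> R) (T : R -> R) (U : R * R -> Prop).
Hypothesis eps_pos : 0 < eps.
Hypothesis alpha_neg : alpha < 0.
Hypothesis beta_gt : 2 * PI < beta.
Hypothesis U_open : open U.
Hypothesis U_strip : forall s t, 0 <= s <= eps -> alpha < t < beta -> U (s, t).
Hypothesis X_C7 : C2k 7 U X.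
Hypothesis Y_C7 : C2k 7 U Y.
Hypothesis expansion : forall s t, 0 <= s <= eps -> alpha < t < beta ->
  Rabs (X s t - (cos t - 4 / 3 * a * s ^ 4 * cos (3 * t))) <= K * s ^ 5 /\
  Rabs (Y s t - (sin t - 4 / 3 * a * s ^ 4 * sin (3 * t))) <= K * s ^ 5.
Hypothesis Y_at_0 : forall s, 0 <= s <= eps -> Y s 0 = 0.
Hypothesis T_0 : T 0 = 2 * PI.
Hypothesis T_period : forall s, 0 < s <= eps -> 0 < T s < beta /\
  (forall t, alpha < t < beta -> alpha < t + T s < beta ->
     X s (t + T s) = X s t /\ Y s (t + T s) = Y s t) /\
  (forall t1 t2, 0 <= t1 < T s -> 0 <= t2 < T s ->
     X s t1 = X s t2 -> Y s t1 = Y s t2 -> t1 = t2).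

Lemma unit_circle_at_0 t : alpha < t < beta -> X 0 t = cos t /\ Y 0 t = sin t.
Proof.
intros ht. destruct (expansion 0 t ltac:(lra) ht) as [bX bY].
replace (K * 0 ^ 5) with 0 in bX, bY by ring.
replace (4 / 3 * a * 0 ^ 4) with 0 in bX, bY by ring.
apply Rabs_le_between in bX, bY. split; lra.
Qed.

Lemma partial_y_at_0 t : alpha < t < beta ->
  partial_y X 0 t = - sin t /\ partial_y Y 0 t = cos t.
Proof.
intros ht. assert (near : locally t (fun u => alpha < u < beta))
  by (apply (locally_interval _ t alpha beta); simpl; tauto).
unfold partial_y. split.
- rewrite (Derive_ext_loc _ cos); [apply is_derive_unique, is_derive_cos|].
  apply (filter_imp _ _ (fun u hu => proj1 (unit_circle_at_0 u hu)) near).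
- rewrite (Derive_ext_loc _ sin); [apply is_derive_unique, is_derive_sin|].
  apply (filter_imp _ _ (fun u hu => proj2 (unit_circle_at_0 u hu)) near).
Qed.

Lemma continuous_slice (f : R -> R -> R) s t : U (s, t) -> C2k 0 U f ->
  continuous (fun s => f s t) s.
Proof.
intros Ust Cf. apply (continuous_comp_2 (fun s => s) (fun _ => t) f s).
- apply continuous_id.
- apply continuous_const.
- exact (C2k_continuous _ _ _ Cf _ Ust).
Qed.

Lemma partial_y_positive_near_2PI : exists r : posreal, forall s t,
  Rabs (s - 0) < r -> Rabs (t - 2 * PI) < r -> U (s, t) /\ 1 / 2 < partial_y Y s t.
Proof.
pose proof PI_gt_3. assert (U2PI : U (0, 2 * PI)) by (apply U_strip; lra).
destruct (C2k_partials _ _ _ Y_C7) as [_ [_ CYy]].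
apply (locally_2d_locally (fun s t => U (s, t) /\ 1 / 2 < partial_y Y s t)).
apply (filter_imp (fun z => U z /\ 1 / 2 < partial_y Y (fst z) (snd z))); [intros [s t]; auto|].
apply (filter_and _ _ (U_open _ U2PI)).
apply (C2k_continuous _ _ _ CYy _ U2PI), open_gt.
simpl. rewrite (proj2 (partial_y_at_0 (2 * PI) ltac:(lra))), cos_2PI. lra.
Qed.

Lemma Y_sign_change_near_2PI w : 0 < w <= 1 -> w < beta - 2 * PI ->
  locally 0 (fun s => Y s (2 * PI - w) < 0 /\ 0 < Y s (2 * PI + w)).
Proof.
intros hw hbeta. pose proof PI_gt_3.
assert (sin_w : 0 < sin w) by (pose proof (sin_ge_half w ltac:(lra)); lra).
assert (Y_C0 : C2k 0 U Y) by (apply (C2k_le 0 7); auto; lia).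
apply filter_and.
- apply (continuous_lt_near (fun s => Y s (2 * PI - w))).
  + apply continuous_slice; auto. apply U_strip; lra.
  + rewrite (proj2 (unit_circle_at_0 (2 * PI - w) ltac:(lra))), sin_minus, sin_2PI, cos_2PI.
    lra.
- apply (continuous_gt_near (fun s => Y s (2 * PI + w))).
  + apply continuous_slice; auto. apply U_strip; lra.
  + rewrite (proj2 (unit_circle_at_0 (2 * PI + w) ltac:(lra))), sin_plus, sin_2PI, cos_2PI.
    lra.
Qed.

Lemma implicit_period delta : 0 < delta -> exists rho g, 0 < rho /\
  C1k 7 (fun s => - rho < s < rho) g /\
  forall s, - rho < s < rho -> Rabs (g s - 2 * PI) < delta /\ Y s (g s) = 0.
Proof.
intros hdelta. pose proof PI_gt_3.
destruct (C2k_partials _ _ _ Y_C7) as [Yd _].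
destruct partial_y_positive_near_2PI as [r hr].
pose proof (cond_pos r).
set (m := Rmin (r / 2) ((beta - 2 * PI) / 2)).
assert (hm : 0 < m <= r / 2 /\ m <= (beta - 2 * PI) / 2)
  by (unfold m; split; [split; [apply Rmin_pos | apply Rmin_l] | apply Rmin_r]; lra).
set (w := Rmin (Rmin delta 1) m).
assert (hw : 0 < w <= delta /\ w <= 1 /\ w <= m).
{ unfold w. pose proof (Rmin_l (Rmin delta 1) m). pose proof (Rmin_r (Rmin delta 1) m).
  pose proof (Rmin_l delta 1). pose proof (Rmin_r delta 1).
  split; [split; [repeat apply Rmin_pos|]|]; lra. }
assert (near0 : locally 0 (fun s => Rabs s < r /\
          Y s (2 * PI - w) < 0 /\ 0 < Y s (2 * PI + w))).
{ apply filter_and; [|apply Y_sign_change_near_2PI; lra].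
  apply (locally_interval _ 0 (- r) r); simpl; try lra. intros; apply Rabs_lt_between; lra. }
destruct near0 as [rho hrho].
assert (in_ball : forall s, - rho < s < rho -> ball 0 rho s).
{ intros s hs. unfold ball; simpl; unfold AbsRing_ball, abs, minus, plus, opp; simpl.
  apply Rabs_lt_between. lra. }
assert (box : forall s t, - rho < s < rho -> 2 * PI - r < t < 2 * PI + r ->
          U (s, t) /\ 1 / 2 < partial_y Y s t).
{ intros s t hs ht. apply hr.
  - rewrite Rminus_0_r. apply (proj1 (hrho s (in_ball s hs))).
  - apply Rabs_lt_between. lra. }
destruct (continuous_root_family Y (- rho) rho (2 * PI - w) (2 * PI + w)) as [g hg].
- lra.
- intros s hs v1 v2 h1 h12 h2.
  apply (incr_function (Y s) (2 * PI - r) (2 * PI + r) (partial_y Y s)); simpl; try lra.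
  + intros t ht1 ht2. apply Derive_correct, (Yd (s, t)), (box s t hs); lra.
  + intros t ht1 ht2. pose proof (proj2 (box s t hs ltac:(lra))). lra.
- intros s hs. split; apply (hrho s (in_ball s hs)).
- intros s v hs hv. apply continuity_pt_filterlim, (ex_derive_continuous (Y s)).
  apply (Yd (s, v)), (box s v hs); lra.
- intros s v hs hv. apply continuous_slice; [apply (box s v hs); lra|].
  apply (C2k_le 0 7); auto; lia.
- exists rho, g. split; [exact (cond_pos rho)|]. split.
  + apply (C1k_implicit 7 Y U); auto.
    * apply open_and; [apply open_gt | apply open_lt].
    * intros s hs. destruct (hg s hs). apply (box s); lra.
    * intros s hs. apply hg, hs.
    * intros s hs. apply hg, hs.
    * intros s hs. destruct (hg s hs). pose proof (proj2 (box s (g s) hs ltac:(lra))). lra.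
  + intros s hs. destruct (hg s hs) as [hgs [Y0 _]]. split; auto. apply Rabs_lt_between. lra.
Qed.

Lemma close_to_circle s t : 0 <= s <= 1 -> s <= eps -> alpha < t < beta ->
  Rabs (X s t - cos t) <= (Rabs (4 / 3 * a) + Rabs K) * s ^ 4 /\
  Rabs (Y s t - sin t) <= (Rabs (4 / 3 * a) + Rabs K) * s ^ 4.
Proof.
intros hs hse ht. destruct (expansion s t ltac:(lra) ht) as [bX bY].
assert (s4 : 0 <= s ^ 4) by (apply pow_le; lra).
assert (s5 : K * s ^ 5 <= Rabs K * s ^ 4).
{ replace (s ^ 5) with (s * s ^ 4) by ring. pose proof (Rle_abs K). pose proof (Rabs_pos K).
  assert (s * s ^ 4 <= s ^ 4) by nra.
  apply (Rle_trans _ (Rabs K * (s * s ^ 4)));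
    [apply Rmult_le_compat_r | apply Rmult_le_compat_l]; nra. }
assert (trig : forall c, Rabs c <= 1 -> Rabs (4 / 3 * a * s ^ 4 * c) <= Rabs (4 / 3 * a) * s ^ 4).
{ intros c hc. rewrite Rabs_mult, (Rabs_mult (4 / 3 * a)), (Rabs_right (s ^ 4)) by lra.
  rewrite <- (Rmult_1_r (Rabs (4 / 3 * a) * s ^ 4)) at 2.
  apply Rmult_le_compat_l; auto. apply Rmult_le_pos; auto using Rabs_pos. }
pose proof (trig (cos (3 * t)) ltac:(apply Rabs_le, COS_bound)).
pose proof (trig (sin (3 * t)) ltac:(apply Rabs_le, SIN_bound)).
split.
- replace (X s t - cos t) with ((X s t - (cos t - 4 / 3 * a * s ^ 4 * cos (3 * t)))
                                 + - (4 / 3 * a * s ^ 4 * cos (3 * t))) by ring.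
  apply (Rle_trans _ _ _ (Rabs_triang _ _)). rewrite Rabs_Ropp. lra.
- replace (Y s t - sin t) with ((Y s t - (sin t - 4 / 3 * a * s ^ 4 * sin (3 * t)))
                                 + - (4 / 3 * a * s ^ 4 * sin (3 * t))) by ring.
  apply (Rle_trans _ _ _ (Rabs_triang _ _)). rewrite Rabs_Ropp. lra.
Qed.

Lemma loops_for_small_s w : 0 < w <= 1 / 64 -> alpha <= - 64 * w -> 2 * PI + 64 * w <= beta ->
  exists eps1 A, 0 < eps1 <= eps /\ Rabs (4 / 3 * a) <= A /\ forall s, 0 < s <= eps1 ->
    circle_like_loop (X s) (Y s) alpha beta (T s) w (A * s ^ 4).
Proof.
intros hw halpha hbeta. pose proof PI_gt_3.
destruct (C2k_partials _ _ _ X_C7) as [Xd [_ CXy]].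
destruct (C2k_partials _ _ _ Y_C7) as [Yd [_ CYy]].
assert (slice : forall f, C2k 6 U f -> exists del, 0 < del <= eps /\ forall s t, 0 <= s <= del ->
          - 32 * w <= t <= beta - 8 * w -> Rabs (f s t - f 0 t) < 1 / 8).
{ intros f Cf. apply uniformly_close_to_slice; try lra.
  intros s t hs ht. apply (C2k_continuous _ _ _ Cf), U_strip; lra. }
destruct (slice _ CXy) as [dX [hdX closeX]]. destruct (slice _ CYy) as [dY [hdY closeY]].
set (A := Rabs (4 / 3 * a) + Rabs K + 1).
assert (hA : Rabs (4 / 3 * a) + Rabs K + 1 <= A) by (unfold A; lra).
pose proof (Rabs_pos (4 / 3 * a)). pose proof (Rabs_pos K).
set (eps1 := Rmin (Rmin dX dY) (Rmin 1 (w / 8 / A))).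
assert (wA : 0 < w / 8 / A) by (apply Rdiv_lt_0_compat; lra).
assert (he1 : 0 < eps1 /\ eps1 <= dX /\ eps1 <= dY /\ eps1 <= 1 /\ eps1 <= w / 8 / A).
{ unfold eps1. pose proof (Rmin_l (Rmin dX dY) (Rmin 1 (w / 8 / A))).
  pose proof (Rmin_r (Rmin dX dY) (Rmin 1 (w / 8 / A))).
  pose proof (Rmin_l dX dY). pose proof (Rmin_r dX dY).
  pose proof (Rmin_l 1 (w / 8 / A)). pose proof (Rmin_r 1 (w / 8 / A)).
  split; [repeat apply Rmin_pos|]; lra. }
exists eps1, A. split; [lra|]. split; [lra|]. intros s hs.
destruct (T_period s ltac:(lra)) as [hT [periodic simple]].
assert (s4 : s ^ 4 <= s).
{ replace (s ^ 4) with (s * s ^ 3) by ring.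
  assert (s ^ 3 <= 1) by (rewrite <- (pow1 3); apply pow_incr; lra). nra. }
assert (mu_le : A * s ^ 4 <= w / 8).
{ replace (w / 8) with (A * (w / 8 / A)) by (field; lra). apply Rmult_le_compat_l; lra. }
assert (mu_ge : 0 <= A * s ^ 4) by (apply Rmult_le_pos; [lra | apply pow_le; lra]).
split; auto; try lra.
- intros t ht. pose proof (U_strip s t ltac:(lra) ltac:(lra)) as Ust.
  pose proof (closeX s t ltac:(lra) ltac:(lra)) as cX.
  pose proof (closeY s t ltac:(lra) ltac:(lra)) as cY.
  destruct (partial_y_at_0 t ltac:(lra)) as [dX0 dY0]. rewrite dX0 in cX. rewrite dY0 in cY.
  split; [exact (proj2 (Xd _ Ust))|]. split; [exact (proj2 (Yd _ Ust))|].
  apply Rabs_lt_between in cX, cY. unfold partial_y in cX, cY.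
  change (Derive (fun y => X s y) t) with (Derive (X s) t) in cX.
  change (Derive (fun y => Y s y) t) with (Derive (Y s) t) in cY.
  split; apply Rabs_le; lra.
- intros t ht. destruct (close_to_circle s t ltac:(lra) ltac:(lra) ht) as [cX cY].
  assert ((Rabs (4 / 3 * a) + Rabs K) * s ^ 4 <= A * s ^ 4)
    by (apply Rmult_le_compat_r; [apply pow_le|]; lra).
  split; lra.
Qed.

Lemma period_deviation s : 0 < s <= eps -> Rabs (T s - 2 * PI) <= 1.7 ->
  Rabs (4 / 3 * a * s ^ 4) <= 1 / 12 -> Y s (T s) = 0 -> Rabs (T s - 2 * PI) <= 4 * K * s ^ 5.
Proof.
intros hs hT hc YT. destruct (T_period s hs) as [[T_pos T_lt] _].
destruct (expansion s (T s) ltac:(lra) ltac:(lra)) as [_ bY].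
replace (4 * K * s ^ 5) with (4 * (K * s ^ 5)) by ring.
apply (small_root_of_sin_perturbation _ (4 / 3 * a * s ^ 4)); auto.
assert (e1 : sin (T s) = sin (T s - 2 * PI)).
{ rewrite <- (sin_period (T s - 2 * PI) 1). f_equal. simpl. ring. }
assert (e3 : sin (3 * T s) = sin (3 * (T s - 2 * PI))).
{ rewrite <- (sin_period (3 * (T s - 2 * PI)) 3). f_equal. simpl. ring. }
rewrite YT, e1, e3 in bY.
rewrite <- Rabs_Ropp. replace (- _) with (0 - (sin (T s - 2 * PI) - 4 / 3 * a * s ^ 4
  * sin (3 * (T s - 2 * PI)))) by ring. exact bY.
Qed.

Lemma exists_loop_scale : exists w, 0 < w <= 1 / 64 /\ alpha <= - 64 * w /\ 2 * PI + 64 * w <= beta.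
Proof.
exists (Rmin (Rmin (- alpha) (beta - 2 * PI)) 1 / 64).
pose proof (Rmin_l (Rmin (- alpha) (beta - 2 * PI)) 1).
pose proof (Rmin_r (Rmin (- alpha) (beta - 2 * PI)) 1).
pose proof (Rmin_l (- alpha) (beta - 2 * PI)). pose proof (Rmin_r (- alpha) (beta - 2 * PI)).
assert (0 < Rmin (Rmin (- alpha) (beta - 2 * PI)) 1) by (repeat apply Rmin_pos; lra).
lra.
Qed.

Theorem period_C7_and_close_to_2PI : exists eps', 0 < eps' <= eps /\
  C1k_on_interval 7 0 eps' T /\
  exists K', forall s, 0 <= s <= eps' -> Rabs (T s - 2 * PI) <= K' * s ^ 5.
Proof.
pose proof PI_gt_3.
destruct exists_loop_scale as [w [hw [halpha hbeta]]].
destruct (loops_for_small_s w hw halpha hbeta) as [eps1 [A [he1 [hA loops]]]].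
destruct (implicit_period (2 * w) ltac:(lra)) as [rho [g [hrho [Cg hg]]]].
set (eps' := Rmin eps1 (rho / 2)).
assert (he' : 0 < eps' <= eps1 /\ eps' <= rho / 2)
  by (unfold eps'; split; [split; [apply Rmin_pos | apply Rmin_l] | apply Rmin_r]; lra).
assert (g_T : forall s, 0 <= s <= eps' -> g s = T s).
{ intros s hs. destruct (hg s ltac:(lra)) as [hgs Yg].
  destruct (Req_dec s 0) as [->|s0].
  - apply Rabs_lt_between in hgs. rewrite T_0. apply sin_root_near_2PI.
    + apply Rabs_le. lra.
    + rewrite <- (proj2 (unit_circle_at_0 (g 0) ltac:(lra))). exact Yg.
  - apply (loop_period_unique_root _ _ _ _ _ _ _ (loops s ltac:(lra))); [apply Y_at_0 | |]; lra. }
exists eps'. split; [lra|]. split.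
- exists (fun s => - rho < s < rho), g. split; [apply open_and; [apply open_gt | apply open_lt]|].
  split; [intros; lra|]. split; auto.
- exists (4 * K). intros s hs. destruct (Req_dec s 0) as [->|s0].
  { rewrite T_0, Rminus_diag, Rabs_R0. simpl. lra. }
  pose proof (loops s ltac:(lra)) as L.
  pose proof (loop_period_near_2PI _ _ _ _ _ _ _ L). pose proof (loop_mu _ _ _ _ _ _ _ L).
  apply period_deviation; try lra.
  + rewrite Rabs_mult, (Rabs_right (s ^ 4)) by (apply Rle_ge, pow_le; lra).
    assert (Rabs (4 / 3 * a) * s ^ 4 <= A * s ^ 4)
      by (apply Rmult_le_compat_r; [apply pow_le |]; lra).
    lra.
  + rewrite <- (g_T s hs). apply hg. lra.
Qed.

End Expansion.

Lemma Rabs_Im_le_Cmod (c : C) : Rabs (Im c) <= Cmod c.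
Proof.
destruct c as [x y]. unfold Cmod, Im; simpl. rewrite <- sqrt_Rsqr_abs.
apply sqrt_le_1_alt. unfold Rsqr. nra.
Qed.

Lemma Cmod_bound_parts (z : C) t r E :
  Cmod (Cminus z (Cminus (cis t) (Cmult (RtoC r) (cis (3 * t))))) <= E ->
  Rabs (Re z - (cos t - r * cos (3 * t))) <= E /\
  Rabs (Im z - (sin t - r * sin (3 * t))) <= E.
Proof.
intros hE. split; refine (Rle_trans _ _ _ _ hE).
- refine (Rle_trans _ _ _ _ (re_le_Cmod _)). right.
  destruct z. unfold Cminus, Cplus, Copp, Cmult, RtoC, cis, Re; simpl. f_equal. ring.
- refine (Rle_trans _ _ _ _ (Rabs_Im_le_Cmod _)). right.
  destruct z. unfold Cminus, Cplus, Copp, Cmult, RtoC, cis, Im; simpl. f_equal. ring.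
Qed.

Theorem mainTheorem7 (eps alpha beta a : R) (zh : R -> R -> C) (T : R -> R) :
  0 < eps -> alpha < 0 -> 2 * PI < beta ->
  C2k_on_complex 7 (fun p => 0 <= fst p <= eps /\ alpha < snd p < beta) zh ->
  (exists K : R, forall s t, 0 <= s <= eps -> alpha < t < beta ->
      Cmod (Cminus (zh s t)
                   (Cminus (cis t) (Cmult (RtoC (4/3 * a * s ^ 4)) (cis (3 * t)))))
        <= K * s ^ 5) ->
  (forall s, 0 <= s <= eps -> Im (zh s 0) = 0) ->
  T 0 = 2 * PI ->
  (forall s, 0 < s <= eps ->
     0 < T s /\ T s < beta /\
     (forall t, alpha < t < beta -> alpha < t + T s < beta ->
        zh s (t + T s) = zh s t) /\
     (forall t1 t2, 0 <= t1 < T s -> 0 <= t2 < T s -> zh s t1 = zh s t2 -> t1 = t2)) ->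
  exists eps', 0 < eps' <= eps /\
    C1k_on_interval 7 0 eps' T /\
    exists K : R, forall s, 0 <= s <= eps' -> Rabs (T s - 2 * PI) <= K * s ^ 5.
Proof.
intros heps halpha hbeta [U [U_open [U_strip [CX CY]]]] [K expansion] Im0 T0 T_loop.
apply (period_C7_and_close_to_2PI eps alpha beta a K
         (fun s t => Re (zh s t)) (fun s t => Im (zh s t)) T U); auto.
- intros s t hs ht. apply Cmod_bound_parts, expansion; auto.
- intros s hs. destruct (T_loop s hs) as [hT0 [hT1 [periodic simple]]].
  split; [lra|]. split.
  + intros t ht ht'. rewrite (periodic t ht ht'). auto.
  + intros t1 t2 h1 h2 eX eY. apply simple; auto.
    destruct (zh s t1), (zh s t2). simpl in eX, eY. congruence.
Qed.
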